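(* For every parallel offering instance $I$, the policy $\mathsf{ALG}_{\mathtt{par}}$ defined below satisfies $R_{\mathsf{ALG}_{\mathtt{par}}}(I)\ge(1-1/e)\,\mathrm{LP}_{\mathtt{par}}(I)\ge(1-1/e)\,\mathsf{OPT}_{\mathtt{par}}(I)$. Policy $\mathsf{ALG}_{\mathtt{par}}$: take an optimal solution $y$ of $\mathrm{LP}_{\mathtt{par}}(I)$ and, independently of the candidates' acceptance decisions, generate a random matrix $Y\in\{0,1\}^{n\times k}$ by the Gandhi–Khuller–Parthasarathy–Srinivasan dependent rounding of $y$ on the complete bipartite graph between candidates $[n]$ and positions $[k]$ (edge weights $y_{ij}$). Form for each position $j$ the list $L_j=\{i:Y_{ij}=1\}$ (so $|L_j|\le T$ and each candidate belongs to at most one list). Run the lists in parallel: in each round, for each position $j$ not yet filled, send an offer for $j$ to the not-yet-offered candidate of $L_j$ with largest $v_{ij}$ (if any remains).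
   Context: Parallel offering problem: integers $1\le k\le T\le n$; $n$ candidates, $k$ positions; $p_{ij}\in[0,1]$ acceptance probability and $v_{ij}\ge0$ value of candidate $i$ for position $j$; acceptance indicators $A_{ij}$ with $\mathbb{P}(A_{ij}=1)=p_{ij}$, possibly correlated across positions for the same candidate but independent across candidates, fixed before the process. In each of $T$ rounds the firm may send at most one offer per unfilled position; each candidate receives at most one offer in total; if $i$ receives an offer for $j$ and $A_{ij}=1$ then $j$ is filled and the firm earns $v_{ij}$. $R_\pi(I)$ is expected total value; $\mathsf{OPT}_{\mathtt{par}}(I)$ the supremum over all (adaptive) policies. $\mathrm{LP}_{\mathtt{par}}(I)$: maximize $\sum_{j,i}v_{ij}p_{ij}y_{ij}$ s.t. $\sum_i y_{ij}\le T\ \forall j$; $\sum_ip_{ij}y_{ij}\le1\ \forall j$; $\sum_jy_{ij}\le1\ \forall i$; $0\le y_{ij}\le1$. The GKPS dependent rounding of weights $y_e\in[0,1]$ on the edges of a bipartite graph outputs random $Y_e\in\{0,1\}$ with: (P1) $\mathbb{E}Y_e=y_e$; (P2) for every vertex $u$, $\sum_{e\ni u}Y_e\in\{\lfloor\ell_u\rfloor,\lceil\ell_u\rceil\}$ almost surely, where $\ell_u=\sum_{e\ni u}y_e$; (P3) for every vertex $u$, every set $S$ of edges incident to $u$ and $b\in\{0,1\}$, $\mathbb{P}(\bigcap_{e\in S}\{Y_e=b\})\le\prod_{e\in S}\mathbb{P}(Y_e=b)$. *)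

From HB Require Import structures.
From mathcomp Require Import all_boot all_order all_algebra.
From mathcomp Require Import classical_sets reals.
From mathcomp Require Import sequences exp.
Set Implicit Arguments. Unset Strict Implicit. Unset Printing Implicit Defensive.
Import Order.TTheory GRing.Theory Num.Theory.
Local Open Scope ring_scope.

Section ParallelOffering.
Variables (R : realType) (n k : nat).

(* a 0/1 matrix indexed by candidates x positions; used both for the
   acceptance indicators A_{ij} and for the rounded matrix Y_{ij} *)
Definition mat := {ffun 'I_n -> {ffun 'I_k -> bool}}.

(* D i a = probability that candidate i's acceptance vector (A_{ij})_j is a;
   candidates are independent, so the law of A is the product measure. *)
Definition accP (D : 'I_n -> {ffun 'I_k -> bool} -> R) (A : mat) : R :=
  \prod_(i < n) D i (A i).

Definition pacc (D : 'I_n -> {ffun 'I_k -> bool} -> R) (i : 'I_n) (j : 'I_k) : R :=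
  \sum_(a : {ffun 'I_k -> bool} | a j) D i a.

(* One round as observed by the firm: for each position j, either no offer,
   or an offer to candidate i together with its outcome (accepted or not). *)
Definition round_rec := {ffun 'I_k -> option ('I_n * bool)}.
Definition history := seq round_rec.
Definition offers := {ffun 'I_k -> option 'I_n}.
Definition policy := history -> offers.

Definition filled (h : history) (j : 'I_k) : bool :=
  has (fun r : round_rec => if r j is Some (_, true) then true else false) h.

Definition offered (h : history) (i : 'I_n) : bool :=
  has (fun r : round_rec =>
         [exists j, if r j is Some (i', _) then i' == i else false]) h.

Definition valid_offers (h : history) (o : offers) : Prop :=
  (forall j i, o j = Some i -> ~~ filled h j /\ ~~ offered h i) /\
  (forall j j' i, o j = Some i -> o j' = Some i -> j = j').

Definition outcome (A : mat) (o : offers) : round_rec :=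
  [ffun j => if o j is Some i then Some (i, A i j) else None].

Fixpoint run (pol : policy) (A : mat) (t : nat) (h : history) : history :=
  if t is t'.+1 then run pol A t' (rcons h (outcome A (pol h))) else h.

Fixpoint run_valid (pol : policy) (A : mat) (t : nat) (h : history) : Prop :=
  if t is t'.+1 then
    valid_offers h (pol h) /\ run_valid pol A t' (rcons h (outcome A (pol h)))
  else True.

Definition valid_policy (T : nat) (pol : policy) : Prop :=
  forall A : mat, run_valid pol A T [::].

Definition hist_value (v : 'I_n -> 'I_k -> R) (h : history) : R :=
  \sum_(r <- h) \sum_(j < k) (if r j is Some (i, true) then v i j else 0).

Definition Rpol (D : 'I_n -> {ffun 'I_k -> bool} -> R) (v : 'I_n -> 'I_k -> R)
  (T : nat) (pol : policy) : R :=
  \sum_(A : mat) accP D A * hist_value v (run pol A T [::]).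

(* randomized policies: finite mixtures of feasible deterministic policies
   (the randomization being independent of the acceptance indicators) *)
Definition valid_rpolicy (T m : nat) (w : 'I_m -> R) (pols : 'I_m -> policy) : Prop :=
  (forall l, 0 <= w l /\ valid_policy T (pols l)) /\ \sum_(l < m) w l = 1.

Definition Rrpol D v T (m : nat) (w : 'I_m -> R) (pols : 'I_m -> policy) : R :=
  \sum_(l < m) w l * Rpol D v T (pols l).

Definition OPTpar D v T : R :=
  sup [set x : R | exists m w pols,
         valid_rpolicy T w pols /\ x = @Rrpol D v T m w pols].

Definition LP_obj D (v : 'I_n -> 'I_k -> R) (y : 'I_n -> 'I_k -> R) : R :=
  \sum_(j < k) \sum_(i < n) v i j * pacc D i j * y i j.

Definition LP_feasible D (T : nat) (y : 'I_n -> 'I_k -> R) : Prop :=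
  (forall j, \sum_(i < n) y i j <= T%:R) /\
  (forall j, \sum_(i < n) pacc D i j * y i j <= 1) /\
  (forall i, \sum_(j < k) y i j <= 1) /\
  (forall i j, 0 <= y i j <= 1).

Definition LPpar D v T : R :=
  sup [set x : R | exists y, LP_feasible D T y /\ x = LP_obj D v y].

Definition LP_optimal D v T (y : 'I_n -> 'I_k -> R) : Prop :=
  LP_feasible D T y /\ (forall y', LP_feasible D T y' -> LP_obj D v y' <= LP_obj D v y).

Definition prob (PY : mat -> R) (E : pred mat) : R := \sum_(Y : mat | E Y) PY Y.

(* PY is the law of the output of a dependent rounding of y on the complete
   bipartite graph [n] x [k] satisfying the GKPS properties (P1)-(P3). *)
Definition GKPS_rounding (y : 'I_n -> 'I_k -> R) (PY : mat -> R) : Prop :=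
  (forall Y, 0 <= PY Y) /\ \sum_(Y : mat) PY Y = 1 /\
  (forall i j, prob PY (fun Y => Y i j) = y i j) /\
  (forall i Y, 0 < PY Y ->
     let l := \sum_(j < k) y i j in
     let s : R := (\sum_(j < k) (Y i j : nat))%:R in
     s = (Num.floor l)%:~R \/ s = (Num.ceil l)%:~R) /\
  (forall j Y, 0 < PY Y ->
     let l := \sum_(i < n) y i j in
     let s : R := (\sum_(i < n) (Y i j : nat))%:R in
     s = (Num.floor l)%:~R \/ s = (Num.ceil l)%:~R) /\
  (forall i (S : {set 'I_k}) (b : bool),
     prob PY (fun Y => [forall j in S, Y i j == b])
       <= \prod_(j in S) prob PY (fun Y => Y i j == b)) /\
  (forall j (S : {set 'I_n}) (b : bool),
     prob PY (fun Y => [forall i in S, Y i j == b])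
       <= \prod_(i in S) prob PY (fun Y => Y i j == b)).

Definition alg_policy (v : 'I_n -> 'I_k -> R) (Y : mat) : policy :=
  fun h => [ffun j =>
    if filled h j then None else
    [pick i | [&& Y i j, ~~ offered h i &
       [forall i', (Y i' j && ~~ offered h i') ==>
          ((v i' j < v i j) || ((v i' j == v i j) && (i <= i')%N))]]]].

Definition R_ALG D v T (PY : mat -> R) : R :=
  \sum_(Y : mat) PY Y * Rpol D v T (alg_policy v Y).

End ParallelOffering.

From HB Require Import structures.
From mathcomp Require Import all_boot all_order all_algebra.
From mathcomp Require Import classical_sets reals interval_inference.
From mathcomp Require Import sequences exp convex.
From mathcomp Require Import ring zify.
Import Order.TTheory GRing.Theory Num.Theory.
Local Open Scope ring_scope.

(* OPT <= LP: a feasible policy induces the LP point x_ij = expected number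
   of offers of position j to candidate i.  A candidate is offered at most
   once, a position is filled at most once and there are T rounds; and since
   the offer of j to i is decided before A_ij is revealed, the expected
   reward is the LP objective at x.

   ALG: by (P2) every list has at most T members and every candidate lies in
   at most one list, so each list is scanned in decreasing value until its
   first acceptance, and position j earns max {v_ij | i in L_j, A_ij = 1}.
   Writing this maximum as a layer-cake integral, it suffices that for every
   set S of candidates some member of S in L_j accepts with probability at
   least (1 - 1/e) s, where s = sum_(i in S) p_ij y_ij <= 1.  By negative
   correlation (P3) nobody in S accepts with probability at most
   prod_(i in S) (1 - p_ij y_ij) <= exp (- s), and 1 - exp (- s) >= (1 - 1/e) s
   on [0, 1] by concavity. *)

Section History.
Context {n k : nat}.
Implicit Types (pol : policy n k) (A : mat n k) (h : history n k) (o : offers n k).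

Lemma run_rcons pol A t h :
  run pol A t.+1 h = rcons (run pol A t h) (outcome A (pol (run pol A t h))).
Proof. by elim: t h => [|t IH] h //=; rewrite -IH. Qed.

Lemma size_run pol A t h : size (run pol A t h) = (size h + t)%N.
Proof. by elim: t h => [|t IH] h /=; rewrite ?addn0 // IH size_rcons addSnnS. Qed.

Lemma run_ind pol A (P : history n k -> Prop) t h :
  P h -> (forall h', P h' -> P (rcons h' (outcome A (pol h')))) ->
  P (run pol A t h).
Proof. by elim: t h => [|t IH] h //= Ph st; apply: IH => //; apply: st. Qed.

Lemma run_validS pol A t h :
  run_valid pol A t.+1 h <->
  run_valid pol A t h /\ valid_offers (run pol A t h) (pol (run pol A t h)).
Proof.
elim: t h => [|t IH] h /=; first by split=> [[]|[]].
split=> [[v1 /IH [v2 v3]]|[[v1 v2] v3]] //.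
by split=> //; apply/IH.
Qed.

Lemma run_valid_lt pol A T h : run_valid pol A T h ->
  forall t, (t < T)%N -> valid_offers (run pol A t h) (pol (run pol A t h)).
Proof.
elim: T => [|T IH] //= hv t; rewrite ltnS leq_eqVlt => /orP[/eqP->|ltT].
  by have /run_validS [] := hv.
by apply: IH => //; have /run_validS [] := hv.
Qed.

Lemma outcomeE A o j :
  outcome A o j = if o j is Some i then Some (i, A i j) else None.
Proof. by rewrite ffunE. Qed.

Lemma filled_rcons h r j :
  filled (rcons h r) j = filled h j || (if r j is Some (_, true) then true else false).
Proof. by rewrite /filled has_rcons orbC. Qed.

Lemma offered_outcome h A o i :
  offered (rcons h (outcome A o)) i = offered h i || [exists j, o j == Some i].
Proof.
rewrite /offered has_rcons orbC; congr (_ || _).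
apply/existsP/existsP => -[j hj]; exists j; move: hj; rewrite outcomeE.
case: (o j) => //= i'.
all: by [move/eqP->|move/eqP=> [->]].
Qed.

Lemma valid_offers_once h o i : valid_offers h o ->
  (\sum_j (o j == Some i : nat) <= 1)%N /\
  ((0 < \sum_j (o j == Some i : nat))%N -> ~~ offered h i).
Proof.
move=> [vo vu]; case: (pickP (fun j => o j == Some i)) => [j0 e|none]; last first.
  by rewrite big1 // => j _; rewrite none.
split; last by have [] := vo _ _ (eqP e).
rewrite (bigD1 j0) //= e big1 // => j ne.
by case: eqP => // ej; move: ne; rewrite (vu _ _ _ (eqP e) ej) eqxx.
Qed.

End History.
Arguments run_valid_lt {n k pol A T h} _ {t}.

Lemma sum_eq_Some_and {n} (o : option 'I_n) (b : 'I_n -> bool) :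
  (\sum_i ((o == Some i) && b i : nat) = if o is Some i0 then (b i0 : nat) else 0)%N.
Proof.
case: o => [i0|]; last by rewrite big1.
rewrite (bigD1 i0) //= eqxx big1 ?addn0 // => i ne.
by case: eqP => // -[e]; rewrite e eqxx in ne.
Qed.

Lemma sum_eq_Some_le1 {n} (o : option 'I_n) : (\sum_i (o == Some i : nat) <= 1)%N.
Proof.
have := sum_eq_Some_and o (fun _ => true).
under eq_bigr do rewrite andbT.
by case: o => [i0|] ->.
Qed.

Section SetRow.
Context {n k : nat}.
Implicit Types (A : mat n k).

Definition set_row A i (b : {ffun 'I_k -> bool}) : mat n k :=
  [ffun i' => if i' == i then b else A i'].

Lemma set_row_eq A i b : set_row A i b i = b.
Proof. by rewrite ffunE eqxx. Qed.

Lemma set_row_neq A i b i' : i' != i -> set_row A i b i' = A i'.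
Proof. by move=> ne; rewrite ffunE (negbTE ne). Qed.

Lemma set_rowK A i b : set_row (set_row A i b) i (A i) = A.
Proof. by apply/ffunP => i'; rewrite !ffunE; case: eqP => [->|]. Qed.

End SetRow.

Section ProductMeasure.
Context {R : realType} {n k : nat} {D : 'I_n -> {ffun 'I_k -> bool} -> R}.
Hypothesis hD0 : forall i a, 0 <= D i a.
Hypothesis hD1 : forall i, \sum_(a : {ffun 'I_k -> bool}) D i a = 1.
Implicit Types (A : mat n k) (F G : mat n k -> R).

Lemma accP_ge0 A : 0 <= accP D A.
Proof. exact: prodr_ge0. Qed.

Lemma sum_accP_prod (H : 'I_n -> {ffun 'I_k -> bool} -> R) :
  \sum_A accP D A * \prod_i H i (A i) = \prod_i \sum_a D i a * H i a.
Proof.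
by rewrite bigA_distr_bigA /=; apply: eq_bigr => A _; rewrite /accP -big_split.
Qed.

Lemma sum_accP : \sum_A accP D A = 1.
Proof.
by rewrite /accP -bigA_distr_bigA big1 // => i _; rewrite hD1.
Qed.

Lemma accP_set_row A i b : accP D (set_row A i b) * D i (A i) = accP D A * D i b.
Proof.
rewrite /accP (bigD1 i) //= [in RHS](bigD1 i) //= set_row_eq.
under eq_bigr => i' ne do rewrite set_row_neq //.
ring.
Qed.

Lemma sum_accP_resample F i :
  \sum_A accP D A * F A = \sum_A accP D A * \sum_b D i b * F (set_row A i b).
Proof.
transitivity (\sum_A \sum_b accP D A * D i b * F A).
  apply: eq_bigr => A _; rewrite -[LHS]mulr1 -(hD1 i) mulr_sumr.
  by apply: eq_bigr => b _; rewrite mulrAC.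
under [RHS]eq_bigr do rewrite mulr_sumr; under [RHS]eq_bigr do under eq_bigr do rewrite mulrA.
rewrite !(pair_bigA _ (fun A b => accP D A * D i b * _)) /=.
pose swap (p : mat n k * {ffun 'I_k -> bool}) := (set_row p.1 i p.2, p.1 i).
have swapK : involutive swap by move=> [A b]; rewrite /swap /= set_rowK set_row_eq.
rewrite (reindex_inj (inv_inj swapK)); apply: eq_bigr => -[A b] _ /=.
by rewrite accP_set_row.
Qed.

Lemma sum_pacc i j : \sum_b D i b * (b j)%:R = pacc D i j.
Proof.
rewrite /pacc [RHS]big_mkcond; apply: eq_bigr => b _.
by case: (b j); rewrite ?mulr1 ?mulr0.
Qed.

Lemma pacc_ge0 i j : 0 <= pacc D i j.
Proof. exact: sumr_ge0. Qed.

Lemma pacc_le1 i j : pacc D i j <= 1.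
Proof.
rewrite -(hD1 i) [leRHS](bigID (fun a : {ffun _ -> bool} => a j)) /=.
by rewrite lerDl sumr_ge0.
Qed.

Lemma sum_accP_indep F i j : (forall A b, F (set_row A i b) = F A) ->
  \sum_A accP D A * (F A * (A i j)%:R) = pacc D i j * \sum_A accP D A * F A.
Proof.
move=> Finv; rewrite (sum_accP_resample _ i) mulr_sumr; apply: eq_bigr => A _.
rewrite mulrCA -sum_pacc mulr_suml; congr (_ * _); apply: eq_bigr => b _.
by rewrite Finv set_row_eq mulrCA mulrC.
Qed.

Lemma sum_accP_le G c : (forall A, G A <= c) -> \sum_A accP D A * G A <= c.
Proof.
move=> hG; apply: le_trans (_ : \sum_A accP D A * c <= c).
  by apply: ler_sum => A _; apply: ler_wpM2l => //; apply: accP_ge0.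
by rewrite -mulr_suml sum_accP mul1r.
Qed.

Lemma sum_accP_ge0 G : (forall A, 0 <= G A) -> 0 <= \sum_A accP D A * G A.
Proof. by move=> hG; apply: sumr_ge0 => A _; rewrite mulr_ge0 ?accP_ge0. Qed.

Lemma sum_accP_not_accepted j (Y : mat n k) (S : {set 'I_n}) :
  \sum_A accP D A * \prod_(i in S) (1 - (Y i j && A i j : nat)%:R) =
  \prod_(i in S) (1 - (Y i j : nat)%:R * pacc D i j).
Proof.
pose H i (a : {ffun 'I_k -> bool}) : R := if i \in S then 1 - (Y i j && a j : nat)%:R else 1.
rewrite (eq_bigr (fun A => accP D A * \prod_i H i (A i))); last first.
  by move=> A _; rewrite big_mkcond.
rewrite sum_accP_prod [RHS]big_mkcond; apply: eq_bigr => i _; rewrite /H.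
case: (i \in S); last by rewrite -mulr_suml hD1 mul1r.
under eq_bigr do rewrite mulrBr mulr1.
rewrite sumrB hD1 -sum_pacc mulr_sumr; congr (_ - _); apply: eq_bigr => a _.
by case: (Y i j); case: (a j); rewrite /= ?mulr1 ?mulr0 ?mul0r ?mul1r.
Qed.

End ProductMeasure.

Section PolicyLP.
Context {R : realType} {n k T : nat} {D : 'I_n -> {ffun 'I_k -> bool} -> R}.
Hypothesis hD0 : forall i a, 0 <= D i a.
Hypothesis hD1 : forall i, \sum_(a : {ffun 'I_k -> bool}) D i a = 1.
Context {v : 'I_n -> 'I_k -> R} {pol : policy n k}.
Hypothesis hpol : valid_policy T pol.
Implicit Types (A : mat n k) (i : 'I_n) (j : 'I_k).

Lemma run_set_row A i b t : ~~ offered (run pol A t [::]) i ->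
  run pol (set_row A i b) t [::] = run pol A t [::].
Proof.
elim: t => [|t IH] //; rewrite !run_rcons offered_outcome negb_or.
move=> /andP[nof /existsPn nj]; rewrite IH //; congr rcons.
apply/ffunP => j; rewrite !outcomeE; case E: (pol _ j) => [i'|] //.
have ne : i' != i by apply: contraNneq (nj j) => <-; rewrite E.
by rewrite set_row_neq.
Qed.

Definition offer_at t A i j : bool := pol (run pol A t [::]) j == Some i.

Definition num_offers t A i j : nat := \sum_(s < t) offer_at s A i j.

Definition expected_offers i j : R := \sum_A accP D A * (num_offers T A i j)%:R.

(* A feasible policy never offers to a candidate twice, so up to the round
   where i receives an offer the run cannot depend on row i of A. *)
Lemma offer_at_set_row t i j A b : (t < T)%N ->
  offer_at t (set_row A i b) i j = offer_at t A i j.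
Proof.
move=> lt; have key A' b' : pol (run pol A' t [::]) j = Some i ->
    run pol (set_row A' i b') t [::] = run pol A' t [::].
  move=> e; apply: run_set_row.
  by have [/(_ _ _ e) []] := run_valid_lt (hpol A') lt.
rewrite /offer_at; apply/eqP/eqP => e; last by rewrite key.
by have := key (set_row A i b) (A i) e; rewrite set_rowK => ->.
Qed.

Lemma pacc_expected_offers i j : pacc D i j * expected_offers i j =
  \sum_A accP D A * ((num_offers T A i j)%:R * (A i j)%:R).
Proof.
rewrite sum_accP_indep // => A b; congr (_%:R); apply: eq_bigr => -[t lt] _.
by rewrite offer_at_set_row.
Qed.

Lemma hist_value_run A t : hist_value v (run pol A t [::]) =
  \sum_j \sum_i v i j * ((num_offers t A i j)%:R * (A i j)%:R).
Proof.
elim: t => [|t IH]; first by rewrite /hist_value big_nil big1 // => j _;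
  rewrite big1 // => i _; rewrite /num_offers big_ord0 !mul0r mulr0.
rewrite run_rcons /hist_value big_rcons /= -/(hist_value v _).
under [RHS]eq_bigr => j _ do under eq_bigr => i _ do
  rewrite /num_offers big_ord_recr /= natrD !mulrDl mulrDr.
under [RHS]eq_bigr => j _ do rewrite big_split /=.
rewrite [RHS]big_split /=; congr (_ + _); first exact: IH.
apply: eq_bigr => j _; rewrite outcomeE.
rewrite /offer_at; case: (pol _ j) => [i0|] /=; last first.
  by rewrite big1 // => i _; rewrite !mul0r mulr0.
rewrite (bigD1 i0) //= eqxx big1 ?addr0 => [|i ne].
  by case: (A i0 j); rewrite ?mulr1 ?mulr0 ?mul1r.
by case: eqP => [[e]|]; rewrite ?e ?eqxx // in ne; rewrite !mul0r mulr0.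
Qed.

Lemma Rpol_expected_offers : Rpol D v T pol = LP_obj D v expected_offers.
Proof.
rewrite /Rpol /LP_obj.
under eq_bigr => A _ do rewrite hist_value_run mulr_sumr.
under eq_bigr => A _ do under eq_bigr => j _ do rewrite mulr_sumr.
rewrite exchange_big; apply: eq_bigr => j _.
rewrite exchange_big; apply: eq_bigr => i _.
rewrite -mulrA pacc_expected_offers mulr_sumr; apply: eq_bigr => A _.
by rewrite mulrCA.
Qed.

Lemma num_offers_position_le A j : (\sum_i num_offers T A i j <= T)%N.
Proof.
rewrite exchange_big /=; apply: leq_trans (_ : \sum_(t < T) 1 <= T)%N.
  by apply: leq_sum => t _; apply: sum_eq_Some_le1.
by rewrite sum1_card card_ord.
Qed.

Lemma num_accepted_le_filled A j t : (t <= T)%N ->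
  (\sum_i (num_offers t A i j * A i j)%N <= filled (run pol A t [::]) j)%N.
Proof.
elim: t => [|t IH] lt; first by rewrite big1 // => i _; rewrite /num_offers big_ord0.
rewrite run_rcons filled_rcons outcomeE.
under eq_bigr => i _ do rewrite /num_offers big_ord_recr /= mulnDl.
rewrite big_split /=.
under [X in (_ + X)%N]eq_bigr => i _ do rewrite mulnb.
rewrite sum_eq_Some_and /offer_at.
case E: (pol _ j) => [i0|]; last by rewrite addn0 orbF IH // ltnW.
case Ai: (A i0 j) => /=; last by rewrite addn0 orbF IH // ltnW.
have [/(_ _ _ E) [nf _] _] := run_valid_lt (hpol A) lt.
by have := IH (ltnW lt); rewrite (negbTE nf) leqn0 => /eqP ->.
Qed.

Lemma num_offers_le_offered A i t : (t <= T)%N ->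
  (\sum_j num_offers t A i j <= offered (run pol A t [::]) i)%N.
Proof.
elim: t => [|t IH] lt; first by rewrite big1 // => j _; rewrite /num_offers big_ord0.
rewrite run_rcons offered_outcome.
under eq_bigr => j _ do rewrite /num_offers big_ord_recr /=.
rewrite big_split /=.
have [le1 fresh] := valid_offers_once _ _ i (run_valid_lt (hpol A) lt).
case: (boolP [exists j, pol (run pol A t [::]) j == Some i]) => [ex|nex].
  have pos : (0 < \sum_j (offer_at t A i j : nat))%N.
    by case/existsP: ex => j0 e; rewrite (bigD1 j0) //= /offer_at e.
  have := IH (ltnW lt); rewrite (negbTE (fresh pos)) leqn0 => /eqP ->.
  by rewrite add0n orbT.
have -> : (\sum_j (offer_at t A i j : nat)) = 0%N.
  by rewrite big1 // => j _; rewrite /offer_at (negbTE (existsPn nex j)).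
by rewrite addn0 orbF IH // ltnW.
Qed.

Lemma expected_offers_ge0 i j : 0 <= expected_offers i j.
Proof. exact: sum_accP_ge0. Qed.

Lemma expected_offers_feasible : LP_feasible D T expected_offers.
Proof.
have row i : \sum_j expected_offers i j <= 1.
  rewrite /expected_offers exchange_big /=.
  under eq_bigr do rewrite -mulr_sumr -natr_sum.
  apply: sum_accP_le => // A; rewrite -[1]/(1%:R) ler_nat.
  by rewrite (leq_trans (num_offers_le_offered A i T (leqnn T))) ?leq_b1.
split.
  move=> j; rewrite /expected_offers exchange_big /=.
  under eq_bigr do rewrite -mulr_sumr -natr_sum.
  by apply: sum_accP_le => // A; rewrite ler_nat num_offers_position_le.
split.
  move=> j; under eq_bigr do rewrite pacc_expected_offers.
  rewrite exchange_big /=; under eq_bigr do rewrite -mulr_sumr.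
  apply: sum_accP_le => // A; under eq_bigr do rewrite -natrM.
  rewrite -natr_sum -[1]/(1%:R) ler_nat.
  by rewrite (leq_trans (num_accepted_le_filled A j T (leqnn T))) ?leq_b1.
split=> // i j; rewrite expected_offers_ge0 (le_trans _ (row i)) //.
by rewrite (bigD1 j) //= lerDl sumr_ge0 // => j' _; apply: expected_offers_ge0.
Qed.

Lemma Rpol_le_LP_obj {y} : LP_optimal D v T y -> Rpol D v T pol <= LP_obj D v y.
Proof.
by move=> [_ opt]; rewrite Rpol_expected_offers; apply/opt/expected_offers_feasible.
Qed.

End PolicyLP.

Lemma LPpar_eq_LP_obj {R : realType} {n k T} {D : 'I_n -> {ffun 'I_k -> bool} -> R}
    {v : 'I_n -> 'I_k -> R} {y} :
  LP_optimal D v T y -> LPpar D v T = LP_obj D v y.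
Proof.
move=> [feas opt]; apply/le_anti/andP; split.
  by apply: ge_sup => [|_ [y' [f' ->]]]; [exists (LP_obj D v y), y | exact: opt].
apply: ub_le_sup; last by exists y.
by exists (LP_obj D v y) => _ [y' [f' ->]]; exact: opt.
Qed.

Definition silent_policy n k : policy n k := fun=> [ffun=> None].

Lemma silent_policy_valid n k T : valid_policy T (silent_policy n k).
Proof.
move=> A; suff all_h h : run_valid (silent_policy n k) A T h by [].
elim: T h => [|T IH] h //=; split=> //.
by split=> [j i|j j' i]; rewrite ffunE.
Qed.

Lemma OPTpar_le_LP_obj {R : realType} {n k T} {D : 'I_n -> {ffun 'I_k -> bool} -> R}
    {v : 'I_n -> 'I_k -> R} {y} :
  (forall i a, 0 <= D i a) -> (forall i, \sum_(a : {ffun 'I_k -> bool}) D i a = 1) ->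
  LP_optimal D v T y -> OPTpar D v T <= LP_obj D v y.
Proof.
move=> hD0 hD1 hy; apply: ge_sup.
  exists (Rrpol D v T (fun=> 1) (fun _ : 'I_1 => silent_policy n k)).
  exists 1%N, (fun=> 1), (fun=> silent_policy n k); split=> //.
  by split; [move=> l; split; [exact: ler01 | exact: silent_policy_valid] | rewrite big_ord1].
move=> _ [m [w [pols [[hw hsum] ->]]]].
apply: le_trans (_ : \sum_l w l * LP_obj D v y <= _); last by rewrite -mulr_suml hsum mul1r.
apply: ler_sum => l _; have [w0 hpol] := hw l.
by rewrite ler_wpM2l // (Rpol_le_LP_obj hD0 hD1 hpol hy).
Qed.

Lemma exists_lex_argmax {d} {T : orderType d} {n} (P : pred 'I_n) (f : 'I_n -> T) {i0} :
  P i0 -> exists i, P i &&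
    [forall i', P i' ==> ((f i' < f i)%O || ((f i' == f i) && (i <= i')%N))].
Proof.
move=> Pi0; case: (arg_maxP f Pi0) => i1 Pi1 max1.
have Q1 : P i1 && (f i1 == f i1) by rewrite Pi1 eqxx.
case: (@arg_minnP _ i1 (fun i => P i && (f i == f i1)) (@nat_of_ord n) Q1).
move=> i2 /andP[Pi2 /eqP e2] min2.
exists i2; rewrite Pi2; apply/forallP => i'; apply/implyP => Pi'.
have : (f i' <= f i1)%O by exact: max1.
rewrite e2 le_eqVlt => /orP[/eqP e|->] //.
by rewrite e eqxx /= (min2 i') ?orbT //= Pi' e eqxx.
Qed.

Definition best_accepted {R : realType} {n k} (v : 'I_n -> 'I_k -> R) (Y A : mat n k) j :=
  \big[Num.max/0]_(i | Y i j && A i j) v i j.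

Section AlgRun.
Context {R : realType} {n k T : nat} {v : 'I_n -> 'I_k -> R} {Y A : mat n k}.
Hypothesis hv : forall i j, 0 <= v i j.
Hypothesis Y_row : forall {i j j'}, Y i j -> Y i j' -> j = j'.
Hypothesis Y_col : forall j, (#|[pred i | Y i j]| <= T)%N.
Implicit Types (h : history n k) (i : 'I_n) (j : 'I_k).

Let alg := alg_policy v Y.
Let step h := rcons h (outcome A (alg h)).

Definition value_at h j : R :=
  \sum_(r <- h) (if r j is Some (i, true) then v i j else 0).

Lemma value_at_rcons h r j :
  value_at (rcons h r) j = value_at h j + (if r j is Some (i, true) then v i j else 0).
Proof. by rewrite /value_at big_rcons. Qed.

Lemma value_at_ge0 h j : 0 <= value_at h j.
Proof. by apply: sumr_ge0 => r _; case: (r j) => [[i []]|]. Qed.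

Lemma alg_Some {h j i} : alg h j = Some i ->
  [/\ ~~ filled h j, Y i j, ~~ offered h i &
      forall i', Y i' j -> ~~ offered h i' -> v i' j <= v i j].
Proof.
rewrite /alg /alg_policy ffunE; case: filled => //=.
case: pickP => // i0 /and3P[yi noi /forallP best] [<-].
split=> // i' yi' noi'; move: (best i'); rewrite yi' noi' /=.
by case/orP=> [/ltW|/andP[/eqP -> _]].
Qed.

Lemma alg_None {h j} : ~~ filled h j -> alg h j = None ->
  forall i, Y i j -> offered h i.
Proof.
move=> nf; rewrite /alg /alg_policy ffunE (negbTE nf) /=.
case: pickP => // none _ i yi; apply/negPn/negP => noi.
have [i2 /andP[/andP[yi2 noi2] best]] :=
  exists_lex_argmax [pred i | Y i j && ~~ offered h i] (v^~ j) (introT andP (conj yi noi)).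
by move: (none i2); rewrite yi2 noi2 best.
Qed.

(* Each candidate lies in at most one list, so only an offer for j can reach i. *)
Lemma offered_step h {j i} : Y i j ->
  offered (step h) i = offered h i || (alg h j == Some i).
Proof.
move=> yi; rewrite offered_outcome; congr (_ || _).
apply/existsP/idP => [[j' /eqP e]|e]; last by exists j.
have [_ yi' _ _] := alg_Some e.
by rewrite (Y_row yi yi') e.
Qed.

Lemma card_offered_step {h j i0} : alg h j = Some i0 ->
  #|[pred i | Y i j && offered (step h) i]| = #|[pred i | Y i j && offered h i]|.+1.
Proof.
move=> E; have [_ y0 no0 _] := alg_Some E.
have -> : #|[pred i | Y i j && offered (step h) i]| =
          #|[predU1 i0 & [pred i | Y i j && offered h i]]|.
  apply: eq_card => i; rewrite !inE.
  case: (boolP (Y i j)) => yi /=; last by case: eqP => // ei; rewrite ei y0 in yi.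
  rewrite (offered_step h yi) E orbC; congr (_ || _).
  by apply/eqP/eqP => [[->]|->].
by rewrite cardU1 inE /= (negbTE no0) andbF.
Qed.

(* While j is unfilled, the offers made for j went to distinct members of
   its list, one per round, all of whom rejected. *)
Definition alg_inv j h : Prop :=
  (filled h j -> forall i, Y i j -> A i j -> v i j <= value_at h j) /\
  (~~ filled h j -> [/\ value_at h j = 0,
     (forall i, Y i j -> offered h i -> ~~ A i j) &
     (size h <= #|[pred i | Y i j && offered h i]|)%N \/ forall i, Y i j -> offered h i]).

Lemma alg_inv_step j h : alg_inv j h -> alg_inv j (step h).
Proof.
move=> [Hf Hnf]; rewrite /alg_inv /step filled_rcons value_at_rcons outcomeE.
case F: (filled h j) => /=.
  rewrite (_ : alg h j = None) ?addr0; last by rewrite /alg /alg_policy ffunE F.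
  by split=> // _ i yi ai; apply: Hf.
have [V0 rejected count] := Hnf (negbT F); rewrite V0 add0r.
case E: (alg h j) => [i0|]; last first.
  have all := alg_None (negbT F) E.
  split=> // _; split=> //.
    by move=> i yi; rewrite -/(step h) (offered_step _ yi) E orbF; apply: rejected.
  by right=> i yi; rewrite -/(step h) (offered_step _ yi) all.
have [_ y0 no0 best] := alg_Some E.
case Ai: (A i0 j) => /=.
  split=> // _ i yi ai; case: (boolP (offered h i)) => oi; last exact: best.
  by move: (rejected i yi oi); rewrite ai.
split=> // _; split=> //.
  move=> i yi; rewrite -/(step h) (offered_step _ yi) E => /orP[oi|/eqP[<-]].
    exact: rejected.
  by rewrite Ai.
case: count => [c|all]; last by right=> i yi; rewrite -/(step h) (offered_step _ yi) all.
by left; rewrite -/(step h) (card_offered_step E) size_rcons.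
Qed.

Lemma alg_inv_run j t : alg_inv j (run alg A t [::]).
Proof.
apply: run_ind; last exact: alg_inv_step.
by split=> //= _; split=> //; [rewrite /value_at big_nil | left].
Qed.

(* With T rounds and at most T candidates in the list, an unfilled
   position has exhausted its whole list. *)
Lemma all_offered_of_unfilled {j} :
  ~~ filled (run alg A T [::]) j -> forall i, Y i j -> offered (run alg A T [::]) i.
Proof.
set h := run _ _ _ _ => nf; have [_ /(_ nf) [_ _ [c|//]]] := alg_inv_run j T.
have sub : [pred i | Y i j && offered h i] \subset [pred i | Y i j].
  by apply/fintype.subsetP => i /andP[].
have ecard : #|[pred i | Y i j && offered h i]| = #|[pred i | Y i j]|.
  apply/eqP; rewrite eqn_leq subset_leq_card //.
  by rewrite (leq_trans (Y_col j)) // (leq_trans _ c) // size_run.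
move=> i yi; have /subset_cardP /(_ sub) same := ecard.
by have := same i; rewrite !inE yi /= => ->.
Qed.

Lemma alg_value_position j :
  best_accepted v Y A j <= value_at (run alg A T [::]) j.
Proof.
set h := run alg A T [::]; have [Hf Hnf] := alg_inv_run j T.
case F: (filled h j).
  by apply: bigmax_le => [|i /andP[]]; [apply: value_at_ge0 | apply: Hf].
have [V0 rejected _] := Hnf (negbT F); rewrite V0; apply: bigmax_le => // i /andP[yi ai].
by move: (rejected i yi (all_offered_of_unfilled (negbT F) i yi)); rewrite ai.
Qed.

Lemma alg_value_ge :
  \sum_j best_accepted v Y A j <=
  hist_value v (run (alg_policy v Y) A T [::]).
Proof.
by rewrite /hist_value exchange_big; apply: ler_sum => j _; apply: alg_value_position.
Qed.

End AlgRun.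

Section LayerCake.
Context {R : realDomainType} {I : finType}.
Implicit Types (f q : I -> R) (P : pred I) (S : {set I}) (m : R).

Lemma pos_part_sub_max m a b :
  Num.max (Num.max a b - m) 0 = Num.max (Num.max (a - m) 0) (Num.max (b - m) 0).
Proof. by rewrite addr_maxl -[in LHS](maxxx 0) maxACA. Qed.

Lemma bigmax_peel P {f S m} : 0 <= m ->
  (forall i, i \in S -> m <= f i) -> (forall i, i \notin S -> f i <= 0) ->
  \big[Num.max/0]_(i | P i) f i =
  m * [exists i in S, P i]%:R + \big[Num.max/0]_(i | P i) Num.max (f i - m) 0.
Proof.
move=> m0 fS fnS.
have maxE : \big[Num.max/0]_(i | P i) Num.max (f i - m) 0 =
            Num.max (\big[Num.max/0]_(i | P i) f i - m) 0.
  have id0 : Num.max (0 - m) 0 = 0 by rewrite sub0r max_r // oppr_le0.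
  by rewrite [RHS](big_morph (fun x => Num.max (x - m) 0) (pos_part_sub_max m) id0).
rewrite maxE; case: (boolP [exists i in S, P i]) => [/existsP [i /andP[iS Pi]]|none] /=.
  rewrite mulr1 max_l; first by rewrite addrC subrK.
  by rewrite subr_ge0 (le_trans (fS _ iS)) // le_bigmax_cond.
have -> : \big[Num.max/0]_(i | P i) f i = 0.
  apply: bigmax_eq_id => i Pi; apply: fnS; apply: contra none => iS.
  by apply/existsP; exists i; rewrite iS.
by rewrite mulr0 add0r sub0r max_r // oppr_le0.
Qed.

Lemma sum_peel {f} q {S m} : 0 <= m ->
  (forall i, i \in S -> m <= f i) -> (forall i, i \notin S -> f i = 0) ->
  \sum_i f i * q i = m * \sum_(i in S) q i + \sum_i Num.max (f i - m) 0 * q i.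
Proof.
move=> m0 fS fnS; rewrite [X in m * X]big_mkcond mulr_sumr -big_split.
apply: eq_bigr => i _ /=.
case: (boolP (i \in S)) => iS.
  by rewrite max_l ?subr_ge0 ?fS // -mulrDl addrC subrK.
by rewrite fnS // sub0r max_r ?oppr_le0 // !mulr0 mul0r add0r.
Qed.

(* Induction on the support of f: peeling off its least positive value m splits
   both sides into m times the instance S = supp f plus the same bound for
   max (f - m) 0, whose support is smaller. *)
Lemma layer_cake_bound {Om : finType} (mu : Om -> R) (X : Om -> pred I) q c :
  (forall w, 0 <= mu w) ->
  (forall S, c * \sum_(i in S) q i <= \sum_w mu w * [exists i in S, X w i]%:R) ->
  forall f, (forall i, 0 <= f i) ->
  c * \sum_i f i * q i <= \sum_w mu w * \big[Num.max/0]_(i | X w i) f i.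
Proof.
move=> mu0 hS f; have [N] := ubnP #|[set i | 0 < f i]|; elim: N f => // N IH f lt f0.
case: (boolP [exists i, 0 < f i]) => [/existsP [i0 fi0]|none]; last first.
  have fz i : f i = 0 by apply/le_anti; rewrite f0 andbT leNgt (existsPn none).
  rewrite big1 ?mulr0 => [|i _]; last by rewrite fz mul0r.
  by apply: sumr_ge0 => w _; rewrite mulr_ge0 ?bigmax_ge_id.
set S := [set i | 0 < f i].
have Si0 : i0 \in S by rewrite inE.
have [im Sim minf] := arg_minP f Si0; set m := f im.
have {}Sim : im \in S by [].
have m0 : 0 < m by move: Sim; rewrite inE.
have fS i : i \in S -> m <= f i by move/minf.
have fnS i : i \notin S -> f i = 0.
  by rewrite inE -leNgt => fi; apply/le_anti; rewrite fi f0.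
pose f' i := Num.max (f i - m) 0.
have f'0 i : 0 <= f' i by rewrite le_max lexx orbT.
have lt' : (#|[set i | (0 < f' i)%R]| < N)%N.
  apply: (@leq_trans #|S|); last by rewrite -ltnS.
  apply: proper_card; apply/properP; split.
    apply/fintype.subsetP => i; rewrite !inE /f' lt_max ltxx orbF subr_gt0.
    exact: lt_trans.
  by exists im; rewrite // inE /f' /m subrr maxxx ltxx.
rewrite (sum_peel q (ltW m0) fS fnS) mulrDr.
have fnS' i : i \notin S -> f i <= 0 by move/fnS ->.
under [X in _ <= X]eq_bigr do rewrite (bigmax_peel _ (ltW m0) fS fnS') mulrDr.
rewrite big_split /=; apply: lerD; last exact: IH.
under [X in _ <= X]eq_bigr do rewrite mulrCA.
by rewrite -mulr_sumr mulrCA ler_wpM2l // ltW.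
Qed.

End LayerCake.

Lemma onem_expRN_ge (R : realType) (s : R) : 0 <= s -> s <= 1 ->
  (1 - expR (-1)) * s <= 1 - expR (- s).
Proof.
move=> s0 s1; have := convex_expR (Itv01 s0 s1) (-1) 0.
rewrite !convRE /= expR0 mulr0 addr0 mulrN1 mulr1 /unstable.onem => h.
rewrite (_ : _ * s = 1 - (s * expR (-1) + (1 - s))); last by ring.
by rewrite lerD2l lerN2.
Qed.

Lemma prod_onem_le_expR (R : realType) (I : finType) (S : {pred I}) (x : I -> R) :
  (forall i, 0 <= x i <= 1) -> \prod_(i in S) (1 - x i) <= expR (- \sum_(i in S) x i).
Proof.
move=> x01; rewrite -sumrN expR_sum; apply: ler_prod => i _.
by have /andP[_ x1] := x01 i; rewrite subr_ge0 x1 expR_ge1Dx.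
Qed.

Lemma natr_exists_in (R : comPzRingType) (I : finType) (S : {pred I}) (b : pred I) :
  [exists i in S, b i]%:R = 1 - \prod_(i in S) (1 - (b i)%:R) :> R.
Proof.
case: (boolP [exists i in S, b i]) => [/existsP [i0 /andP[iS bi]]|none] /=.
  by rewrite (bigD1 i0) //= bi subrr mul0r subr0.
rewrite big1 ?subrr // => i iS.
have /negbTE -> : ~~ b i by apply: contra none => bi; apply/existsP; exists i; rewrite iS.
by rewrite subr0.
Qed.

Section RoundingAcceptance.
Context {R : realType} {n k : nat} {D : 'I_n -> {ffun 'I_k -> bool} -> R}.
Hypothesis hD0 : forall i a, 0 <= D i a.
Hypothesis hD1 : forall i, \sum_(a : {ffun 'I_k -> bool}) D i a = 1.
Context {y : 'I_n -> 'I_k -> R} {PY : mat n k -> R}.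
Hypothesis PY_sum1 : \sum_Y PY Y = 1.
Hypothesis PY_marginal : forall i j, prob PY (fun Y => Y i j) = y i j.
Hypothesis PY_negcorr : forall j (S : {set 'I_n}) (b : bool),
  prob PY (fun Y => [forall i in S, Y i j == b])
    <= \prod_(i in S) prob PY (fun Y => Y i j == b).
Variable j : 'I_k.
Implicit Types (Y : mat n k) (S U : {set 'I_n}).

Lemma probE (E : pred (mat n k)) : prob PY E = \sum_Y PY Y * (E Y)%:R.
Proof.
rewrite /prob big_mkcond; apply: eq_bigr => Y _.
by case: (E Y); rewrite ?mulr1 ?mulr0.
Qed.

Lemma prob_not_selected i : prob PY (fun Y => Y i j == false) = 1 - y i j.
Proof.
rewrite -PY_marginal -PY_sum1 /prob [\sum_Y PY Y](bigID (fun Y : mat n k => Y i j)) /=.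
rewrite addrC addrK.
by apply: eq_bigl => Y; case: (Y i j).
Qed.

(* Expanding each factor as (1 - p) + p (1 - Y_i) reduces the claim to the
   negative correlation (P3) of the events {Y_i = 0} on U and its extensions. *)
Lemma negcorr_prod_onem (s : seq 'I_n) U (p : 'I_n -> R) :
  uniq s -> (forall i, i \in s -> i \notin U) -> (forall i, 0 <= p i <= 1) ->
  \sum_Y PY Y * ([forall i in U, Y i j == false]%:R *
                 \prod_(i <- s) (1 - (Y i j)%:R * p i))
   <= \prod_(i in U) (1 - y i j) * \prod_(i <- s) (1 - y i j * p i).
Proof.
move=> + + p01; elim: s U => [|i s IH] U us disj.
  under [X in X <= _]eq_bigr do rewrite big_nil mulr1.
  rewrite big_nil mulr1 -probE (le_trans (PY_negcorr j U false)) //.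
  by under eq_bigr do rewrite prob_not_selected.
case/andP: us => nis us; have [p0 p1] := andP (p01 i).
have niU : i \notin U by apply: disj; rewrite inE eqxx.
have disjU i' : i' \in s -> i' \notin U by move=> h; apply: disj; rewrite inE h orbT.
have disjU1 i' : i' \in s -> i' \notin i |: U.
  by move=> h; rewrite in_setU1 negb_or disjU // andbT; apply: contraNneq nis => <-.
have forallU1 Y : [forall i' in i |: U, Y i' j == false] =
                  (Y i j == false) && [forall i' in U, Y i' j == false].
  by rewrite -!big_andE big_setU1.
have splitY Y : PY Y * ([forall i' in U, Y i' j == false]%:R *
                        \prod_(i0 <- i :: s) (1 - (Y i0 j)%:R * p i0)) =
  (1 - p i) * (PY Y * ([forall i' in U, Y i' j == false]%:R *
                       \prod_(i0 <- s) (1 - (Y i0 j)%:R * p i0))) +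
  p i * (PY Y * ([forall i' in i |: U, Y i' j == false]%:R *
                 \prod_(i0 <- s) (1 - (Y i0 j)%:R * p i0))).
  rewrite forallU1 big_cons.
  by case: (Y i j); case: [forall i' in U, Y i' j == false] => /=; ring.
rewrite (eq_bigr _ (fun Y _ => splitY Y)) big_split /= -!mulr_sumr.
apply: le_trans (lerD (ler_wpM2l _ (IH U us disjU)) (ler_wpM2l p0 (IH _ us disjU1))) _.
  by rewrite subr_ge0.
by rewrite big_setU1 //= big_cons le_eqVlt; apply/orP; left; apply/eqP; ring.
Qed.

Lemma sum_PY_prod_onem_le S :
  \sum_Y PY Y * \prod_(i in S) (1 - (Y i j)%:R * pacc D i j) <=
  \prod_(i in S) (1 - y i j * pacc D i j).
Proof.
rewrite (eq_bigr (fun Y => PY Y * ([forall i in finset.set0, Y i j == false]%:R *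
    \prod_(i <- enum S) (1 - (Y i j)%:R * pacc D i j)))) => [|Y _]; last first.
  by rewrite -big_andE big_set0 mul1r big_enum.
apply: le_trans
  (@negcorr_prod_onem _ finset.set0 (pacc D ^~ j) (enum_uniq S) _ _) _ => [i _|i|].
- by rewrite inE.
- by rewrite (pacc_ge0 hD0) (pacc_le1 hD0 hD1).
- by rewrite big_set0 mul1r big_enum.
Qed.

Lemma prob_accepted_in S :
  \sum_(w : mat n k * mat n k) (PY w.1 * accP D w.2) *
      [exists i in S, w.1 i j && w.2 i j]%:R =
  1 - \sum_Y PY Y * \prod_(i in S) (1 - (Y i j)%:R * pacc D i j).
Proof.
under eq_bigr do rewrite natr_exists_in mulrBr mulr1.
rewrite sumrB; congr (_ - _).
  rewrite -(pair_bigA _ (fun Y A => PY Y * accP D A)) /= -PY_sum1.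
  by apply: eq_bigr => Y _; rewrite -mulr_sumr (sum_accP hD1) mulr1.
rewrite -(pair_bigA _ (fun Y A =>
  PY Y * accP D A * \prod_(i in S) (1 - (Y i j && A i j : nat)%:R))) /=.
apply: eq_bigr => Y _; under eq_bigr do rewrite -mulrA.
by rewrite -mulr_sumr (sum_accP_not_accepted hD1).
Qed.

Lemma prob_accepted_in_ge S :
  (forall i, 0 <= y i j <= 1) -> \sum_i pacc D i j * y i j <= 1 ->
  (1 - expR (-1)) * \sum_(i in S) pacc D i j * y i j <=
  \sum_(w : mat n k * mat n k) (PY w.1 * accP D w.2) *
      [exists i in S, w.1 i j && w.2 i j]%:R.
Proof.
move=> y01 hsum; have py01 i : 0 <= pacc D i j * y i j <= 1.
  have [y0 y1] := andP (y01 i).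
  by rewrite mulr_ge0 ?(pacc_ge0 hD0) // mulr_ile1 ?(pacc_ge0 hD0) ?(pacc_le1 hD0 hD1).
have s0 : 0 <= \sum_(i in S) pacc D i j * y i j.
  by apply: sumr_ge0 => i _; case/andP: (py01 i).
have s1 : \sum_(i in S) pacc D i j * y i j <= 1.
  apply: le_trans hsum; rewrite [leRHS](bigID (fun i => i \in S)) /= lerDl.
  by apply: sumr_ge0 => i _; case/andP: (py01 i).
apply: le_trans (@onem_expRN_ge _ _ s0 s1) _.
rewrite prob_accepted_in lerD2l lerN2 (le_trans (sum_PY_prod_onem_le S)) //.
under eq_bigr do rewrite mulrC.
exact: prod_onem_le_expR.
Qed.

End RoundingAcceptance.

Lemma le_of_floor_or_ceil {R : realType} {s N : nat} {l : R} : l <= N%:R ->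
  (s%:R : R) = (Num.floor l)%:~R \/ (s%:R : R) = (Num.ceil l)%:~R -> (s <= N)%N.
Proof.
move=> lN [e|e]; rewrite -(ler_nat R) e; first exact: le_trans (floor_le l) lN.
have h : (Num.ceil l)%:~R <= (N%:Z)%:~R :> R by rewrite ler_int ceil_le_int -pmulrn.
by rewrite -pmulrn in h.
Qed.

Lemma sum_nat_bool_card n (b : pred 'I_n) : (\sum_i (b i : nat))%N = #|[pred i | b i]|.
Proof.
rewrite -sum1_card [RHS]big_mkcond /=; apply: eq_bigr => i _.
by rewrite inE; case: (b i).
Qed.

Section Guarantee.
Context {R : realType} {n k T : nat} {D : 'I_n -> {ffun 'I_k -> bool} -> R}.
Hypothesis hD0 : forall i a, 0 <= D i a.
Hypothesis hD1 : forall i, \sum_(a : {ffun 'I_k -> bool}) D i a = 1.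
Context {v : 'I_n -> 'I_k -> R} {y : 'I_n -> 'I_k -> R} {PY : mat n k -> R}.
Hypothesis hv : forall i j, 0 <= v i j.
Hypothesis y_feasible : LP_feasible D T y.
Hypothesis PY_rounding : GKPS_rounding y PY.

Lemma rounding_row_unique Y : 0 < PY Y -> forall i j j', Y i j -> Y i j' -> j = j'.
Proof.
move=> pos i j j' yj yj'; apply/eqP/negPn/negP => ne.
have [_ [_ [_ [P2row _]]]] := PY_rounding; have [_ [_ [row _]]] := y_feasible.
have := @le_of_floor_or_ceil _ _ 1 _ (row i) (P2row i Y pos).
rewrite (bigD1 j) // (bigD1 j') /=; last by rewrite eq_sym.
by rewrite yj yj'; lia.
Qed.

Lemma rounding_col_card Y : 0 < PY Y -> forall j, (#|[pred i | Y i j]| <= T)%N.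
Proof.
move=> pos j; have [_ [_ [_ [_ [P2col _]]]]] := PY_rounding; have [col _] := y_feasible.
by rewrite -sum_nat_bool_card; apply: le_of_floor_or_ceil (col j) (P2col j Y pos).
Qed.

Lemma Rpol_alg_ge Y : 0 < PY Y ->
  \sum_A accP D A * \sum_j best_accepted v Y A j <= Rpol D v T (alg_policy v Y).
Proof.
move=> pos; apply: ler_sum => A _; rewrite ler_wpM2l ?(accP_ge0 hD0) //.
apply: alg_value_ge => // [i j j'|]; first exact: rounding_row_unique.
exact: rounding_col_card.
Qed.

Lemma expected_best_accepted_ge j :
  (1 - expR (-1)) * \sum_i v i j * (pacc D i j * y i j) <=
  \sum_(w : mat n k * mat n k) PY w.1 * accP D w.2 * best_accepted v w.1 w.2 j.
Proof.
have [PY0 [PY1 [P1 [_ [_ [_ P3col]]]]]] := PY_rounding.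
have [_ [pacc_y [_ y01]]] := y_feasible.
rewrite /best_accepted.
apply: (layer_cake_bound (fun w : mat n k * mat n k => PY w.1 * accP D w.2)
  (fun w i => w.1 i j && w.2 i j)) => [w|S|i].
- by rewrite mulr_ge0 ?PY0 ?(accP_ge0 hD0).
- exact (prob_accepted_in_ge hD0 hD1 PY1 P1 P3col j S (y01^~ j) (pacc_y j)).
- exact: hv.
Qed.

Lemma R_ALG_ge : (1 - expR (-1)) * LP_obj D v y <= R_ALG D v T PY.
Proof.
have [PY0 _] := PY_rounding.
rewrite /LP_obj mulr_sumr; under eq_bigr do under eq_bigr do rewrite -mulrA.
apply: le_trans (ler_sum _ (fun j _ => expected_best_accepted_ge j)) _.
rewrite exchange_big /=; under eq_bigr do rewrite -mulr_sumr.
rewrite -(pair_bigA _ (fun Y A => PY Y * accP D A * \sum_j best_accepted v Y A j)) /=.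
apply: ler_sum => Y _; under eq_bigr do rewrite -mulrA; rewrite -mulr_sumr.
have [->|nz] := eqVneq (PY Y) 0; first by rewrite !mul0r.
by rewrite ler_wpM2l // Rpol_alg_ge // lt_def nz PY0.
Qed.

End Guarantee.

Theorem theorem5p1 (R : realType) (n k T : nat)
  (D : 'I_n -> {ffun 'I_k -> bool} -> R) (v : 'I_n -> 'I_k -> R)
  (hk : (1 <= k)%N) (hkT : (k <= T)%N) (hTn : (T <= n)%N)
  (hD0 : forall i a, 0 <= D i a) (hD1 : forall i, \sum_(a : {ffun 'I_k -> bool}) D i a = 1)
  (hv : forall i j, 0 <= v i j)
  (y : 'I_n -> 'I_k -> R) (hy : LP_optimal D v T y)
  (PY : mat n k -> R) (hPY : GKPS_rounding y PY) :
  (1 - expR (-1)) * LPpar D v T <= R_ALG D v T PY /\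
  (1 - expR (-1)) * OPTpar D v T <= (1 - expR (-1)) * LPpar D v T.
Proof.
have c_ge0 : 0 <= 1 - expR (-1) :> R by rewrite subr_ge0 expR_le1 oppr_le0 ler01.
have [feas _] := hy.
rewrite (LPpar_eq_LP_obj hy); split.
  exact (R_ALG_ge hD0 hD1 hv feas hPY).
by rewrite ler_wpM2l // OPTpar_le_LP_obj.
Qed.
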